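(* For $n\in\{3,4\}$ there is no u-p-word for $n$-permutations of the form $u=u_1\Diamond u_3u_4\cdots u_N$ containing exactly one $\Diamond$ (that is, with $u_1,u_3,\ldots,u_N$ all integers).
   Context: An $n$-permutation is a permutation of $\{1,\ldots,n\}$. For a word $w$ of distinct numbers, $\mathrm{red}(w)$ is obtained by replacing the $i$-th smallest letter by $i$. Let $\Diamond$ be a symbol not among the integers. A word $f=f_1\cdots f_n$ over the positive integers together with $\Diamond$, whose integer letters are pairwise distinct, covers an $n$-permutation $\pi$ if one can substitute real numbers for the occurrences of $\Diamond$ (independently) so that the resulting word has $n$ pairwise distinct entries and reduces to $\pi$; equivalently, $f_i<f_j\iff\pi_i<\pi_j$ for all positions $i,j$ holding integers. A u-p-word for $n$-permutations is a word $u_1\cdots u_N$, $N\geq n$, over this alphabet containing at least one $\Diamond$, such that every factor $u_i\cdots u_{i+n-1}$ ($1\leq i\leq N-n+1$) has pairwise distinct integer letters and every $n$-permutation is covered by exactly one of these factors. *)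

From mathcomp Require Import all_boot all_fingroup.
Set Implicit Arguments. Unset Strict Implicit. Unset Printing Implicit Defensive.

Definition letter := option nat.
Definition Diamond : letter := None.

Definition int_letters (f : seq letter) : seq nat := pmap id f.

Definition covers (n : nat) (f : seq letter) (p : 'S_n) : Prop :=
  size f = n /\
  forall (i j : 'I_n) (a b : nat),
    nth Diamond f i = Some a -> nth Diamond f j = Some b ->
    (a < b) = (p i < p j).

(* The factor u_{i+1} ... u_{i+n} (0-indexed start i). *)
Definition factor (u : seq letter) (n i : nat) : seq letter :=
  take n (drop i u).

Definition is_upword (n : nat) (u : seq letter) : Prop :=
  [/\ n <= size u,
      Diamond \in u,
      (forall k, Some k \in u -> 0 < k),
      (forall i, i + n <= size u -> uniq (int_letters (factor u n i))) &
      (forall p : 'S_n, exists! i, i + n <= size u /\ covers (factor u n i) p)].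

(* Write u = u_1 Diamond u_3 u_4 ... u_N (1-indexed).  Every factor of length
   n starting at u_3 or later consists of distinct integers, so it covers
   exactly one permutation.  Call a permutation an orphan if it is covered by
   u_3 ... u_{n+1} Diamond but by neither of the two factors containing the
   hole.  An orphan p is covered by a factor starting at some u_k with k >= 3;
   if k > 3, the factor starting at u_(k-1) covers a permutation q whose last
   n-1 entries are ordered like the first n-1 entries of p, i.e. like
   u_3 ... u_{n+1}, so the second factor covers q as well, contradicting
   uniqueness.  Hence every orphan is covered by the third factor, and there is
   at most one.  An exhaustive check over the relative orders of
   u_1, u_3, ..., u_{n+1} shows that for n = 3, 4 either the first two factors
   cover a common permutation or there are two orphans.  Finally u is longer
   than n: otherwise its only factor would cover both the identity and the
   reversal, which order the positions of u_1 and u_3 oppositely. *)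

From mathcomp Require Import all_boot all_fingroup zify.
Set Implicit Arguments. Unset Strict Implicit. Unset Printing Implicit Defensive.

Lemma card_ord_lt n k : k <= n -> #|[set v : 'I_n | v < k]| = k.
Proof.
move=> le_kn; rewrite cardsE cardE /enum_mem -enumT -(size_map val).
rewrite -(filter_map val (fun v => v < 0 + k)) val_enum_ord.
by rewrite filter_iota_ltn ?size_iota.
Qed.

Lemma card_lt_mono (T : finType) (g : T -> nat) i j : g i < g j ->
  #|[set k | g k < g i]| < #|[set k | g k < g j]|.
Proof.
move=> lt_ij; apply/proper_card/properP; split.
  by apply/subsetP => k; rewrite !inE => /ltn_trans; apply.
by exists i; rewrite !inE ?ltnn.
Qed.

Lemma card_perm_lt n (p : 'S_n) i : #|[set j | p j < p i]| = p i.
Proof.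
rewrite -[RHS](@card_ord_lt n) 1?ltnW //.
rewrite -(card_preimset [set v : 'I_n | v < p i] (@perm_inj _ p)).
by apply: eq_card => j; rewrite !inE.
Qed.

Lemma perm_inj_order n (p q : 'S_n) :
  (forall i j, (p i < p j) = (q i < q j)) -> p = q.
Proof.
move=> pq; apply/permP => i.
have same_lt : [set j | p j < p i] = [set j | q j < q i].
  by apply/setP => j; rewrite !inE pq.
by apply/val_inj; rewrite /= -card_perm_lt same_lt card_perm_lt.
Qed.

Lemma exists_perm_order n (w : 'I_n -> nat) : injective w ->
  exists p : 'S_n, forall i j, (w i < w j) = (p i < p j).
Proof.
move=> inj_w; pose rk i := #|[set j | w j < w i]|.
have rk_mono i j : (rk i < rk j) = (w i < w j).
  case: (ltngtP (w i) (w j)) => [lt_ij | lt_ji | /inj_w ->]; last by rewrite ltnn.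
    exact: card_lt_mono.
  by apply/negbTE; rewrite -leqNgt ltnW // card_lt_mono.
have rk_lt i : rk i < n.
  rewrite -[n in _ < n]card_ord -cardsT; apply/proper_card/properP.
  by split; [exact: subsetT | exists i; rewrite !inE ?ltnn].
have inj_rk : injective (fun i => Ordinal (rk_lt i)).
  move=> i j /(congr1 val) eq_rk; apply: inj_w.
  have {}eq_rk : rk i = rk j := eq_rk.
  by case: (ltngtP (w i) (w j)) => //; rewrite -rk_mono eq_rk ltnn.
by exists (perm inj_rk) => i j; rewrite !permE; exact: esym (rk_mono i j).
Qed.

Lemma size_factor n u i : i + n <= size u -> size (factor u n i) = n.
Proof. by move=> le_u; rewrite /factor size_takel // size_drop; lia. Qed.

Lemma nth_factor n u i j : j < n ->
  nth Diamond (factor u n i) j = nth Diamond u (i + j).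
Proof. by move=> lt_jn; rewrite /factor nth_take // nth_drop. Qed.

Lemma factor_cons n u k : k < size u ->
  factor u n.+1 k = nth Diamond u k :: factor u n k.+1.
Proof. by move=> lt_k; rewrite /factor (drop_nth Diamond lt_k). Qed.

Lemma factor_rcons n u k : k + n < size u ->
  factor u n.+1 k = rcons (factor u n k) (nth Diamond u (k + n)).
Proof.
by move=> lt_kn; rewrite /factor (take_nth Diamond) ?nth_drop // size_drop; lia.
Qed.

Lemma int_lettersK f : Diamond \notin f -> map Some (int_letters f) = f.
Proof.
move=> intf; rewrite /int_letters (pmap_filter (f := id)) => [|[]//].
by apply/all_filterP/allP => -[] //; rewrite (negbTE intf).
Qed.

Lemma int_letters_map_Some (s : seq nat) : int_letters (map Some s) = s.
Proof. exact: (@map_pK _ _ id Some (fun=> erefl)). Qed.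

Lemma mem_int_letters f i a : nth Diamond f i = Some a -> a \in int_letters f.
Proof.
move=> fi; rewrite mem_pmap map_id -fi mem_nth //.
by case: ltnP fi => // le_fi; rewrite nth_default.
Qed.

Lemma covers_intsP n (s : seq nat) (p : 'S_n) :
  covers (map Some s) p <->
  size s = n /\ forall i j : 'I_n, (nth 0 s i < nth 0 s j) = (p i < p j).
Proof.
have nthS (i : 'I_n) : size s = n -> nth Diamond (map Some s) i = Some (nth 0 s i).
  by move=> sz; rewrite (nth_map 0) // sz.
split=> [[] | [sz cmp]].
  by rewrite size_map => sz cmp; split=> // i j; apply: cmp; rewrite nthS.
by split=> [|i j a b]; rewrite ?size_map // !nthS // => -[<-] [<-].
Qed.

Lemma covers_ints_exists n (s : seq nat) : size s = n -> uniq s ->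
  exists p : 'S_n, covers (map Some s) p.
Proof.
move=> sz uniq_s; pose w (i : 'I_n) := nth 0 s i.
have inj_w : injective w.
  by move=> i j /eqP; rewrite /w nth_uniq ?sz // => /eqP /val_inj.
have [p cmp] := exists_perm_order inj_w.
by exists p; apply/covers_intsP.
Qed.

Lemma covers_ints_inj n (s : seq nat) (p q : 'S_n) :
  covers (map Some s) p -> covers (map Some s) q -> p = q.
Proof.
move=> /covers_intsP[_ cmp_p] /covers_intsP[_ cmp_q].
by apply: perm_inj_order => i j; rewrite -cmp_p cmp_q.
Qed.

Lemma covers_shift m (s : seq nat) (g : seq letter) (a b : letter)
    (p q : 'S_m.+1) :
  covers (rcons g Diamond) p -> covers (rcons (map Some s) b) p ->
  covers (a :: map Some s) q -> covers (Diamond :: g) q.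
Proof.
move=> [sz_g cov_g] [sz_s cov_s] [_ cov_q].
rewrite size_rcons in sz_g; rewrite size_rcons size_map in sz_s.
move: sz_g sz_s => [sz_g] [sz_s].
split=> [|i j a' b']; first by rewrite /= sz_g.
case: (unliftP ord0 i) => [i'|] -> //; case: (unliftP ord0 j) => [j'|] -> //.
rewrite !lift0 /= => gi gj.
pose wi := widen_ord (leqnSn m) i'; pose wj := widen_ord (leqnSn m) j'.
have nth_g (k : 'I_m) : nth Diamond (rcons g Diamond) k = nth Diamond g k.
  by rewrite nth_rcons sz_g ltn_ord.
have nth_s (k : 'I_m) : nth Diamond (map Some s) k = Some (nth 0 s k).
  by rewrite (nth_map 0) // sz_s.
rewrite (cov_g wi wj a' b') ?nth_g //.
rewrite -(cov_s wi wj (nth 0 s i') (nth 0 s j')) /=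
  ?nth_rcons ?size_map ?sz_s ?ltn_ord ?nth_s //.
by apply: cov_q; rewrite !lift0 /= nth_s.
Qed.

Lemma covers_relabel n (g : nat -> nat) (D : {pred nat}) f (p : 'S_n) :
  {in D &, {mono g : a b / a < b}} -> {subset int_letters f <= D} ->
  covers (map (omap g) f) p <-> covers f p.
Proof.
move=> mono_g sub_f.
have nth_g i : nth Diamond (map (omap g) f) i = omap g (nth Diamond f i).
  case: (ltnP i (size f)) => lt_i; first by rewrite (nth_map Diamond).
  by rewrite !nth_default ?size_map.
have in_D i a : nth Diamond f i = Some a -> a \in D.
  by move/mem_int_letters; apply: sub_f.
split=> -[sz cov]; split.
- by rewrite size_map in sz.
- move=> i j a b fi fj; rewrite -mono_g ?(in_D i a fi) ?(in_D j b fj) //.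
  by apply: cov; rewrite nth_g ?fi ?fj.
- by rewrite size_map.
- move=> i j a b; rewrite !nth_g.
  case fi: (nth Diamond f i) => [a'|] // [<-].
  case fj: (nth Diamond f j) => [b'|] // [<-].
  by rewrite mono_g ?(in_D i a' fi) ?(in_D j b' fj) //; apply: cov.
Qed.

Lemma upword_window_unique n u (p : 'S_n) i j : is_upword n u ->
  i + n <= size u -> j + n <= size u ->
  covers (factor u n i) p -> covers (factor u n j) p -> i = j.
Proof.
case=> _ _ _ _ /(_ p) [k [_ uniq_k]] le_i le_j cov_i cov_j.
by rewrite -(uniq_k i) ?(uniq_k j).
Qed.

Lemma upword_size_gt n u : is_upword n u -> 2 < n ->
  nth Diamond u 0 != Diamond -> nth Diamond u 2 != Diamond -> n < size u.
Proof.
case=> le_nu _ _ _ cover n_gt2 u0 u2; rewrite ltn_neqAle le_nu andbT.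
apply/eqP => eq_nu.
have cov0 (p : 'S_n) : covers (factor u n 0) p.
  have [k [[le_k cov_k] _]] := cover p.
  have k0 : k = 0 by lia.
  by rewrite -k0.
have lt0 : 0 < n by apply: ltn_trans n_gt2.
pose o0 := Ordinal lt0; pose o2 := Ordinal n_gt2.
case E0: (nth Diamond u 0) u0 => [a|] // _; case E2: (nth Diamond u 2) u2 => [b|] // _.
have order (p : 'S_n) : (a < b) = (p o0 < p o2).
  by case: (cov0 p) => _; apply; rewrite nth_factor.
have := order 1%g; have := order (perm (@rev_ord_inj n)).
rewrite !permE /= => ->; lia.
Qed.

Definition orphan n (w0 w1 wF : seq letter) (p : 'S_n) : Prop :=
  [/\ covers wF p, ~ covers w0 p & ~ covers w1 p].

(* Intended instance: [w0] and [w1] are the two factors of u through the hole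
   and [wF] is u_3 ... u_{n+1} Diamond. *)
Definition obstructed n (w0 w1 wF : seq letter) : Prop :=
  (exists p : 'S_n, covers w0 p /\ covers w1 p) \/
  (exists p p' : 'S_n, [/\ p <> p', orphan w0 w1 wF p & orphan w0 w1 wF p']).

Lemma obstructed_relabel n (g : nat -> nat) (D : {pred nat}) w0 w1 wF :
  {in D &, {mono g : a b / a < b}} -> {subset int_letters w0 <= D} ->
  {subset int_letters w1 <= D} -> {subset int_letters wF <= D} ->
  obstructed n (map (omap g) w0) (map (omap g) w1) (map (omap g) wF) ->
  obstructed n w0 w1 wF.
Proof.
move=> mono_g sub0 sub1 subF.
have rel0 := covers_relabel _ mono_g sub0; have rel1 := covers_relabel _ mono_g sub1.
have relF := covers_relabel _ mono_g subF.
have orphan_rel (p : 'S_n) :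
    orphan (map (omap g) w0) (map (omap g) w1) (map (omap g) wF) p ->
    orphan w0 w1 wF p.
  by case=> /relF covF not0 not1; split=> // [/rel0 | /rel1].
case=> [[p [/rel0 cov0 /rel1 cov1]] | [p [p' [neq_pp' orph orph']]]].
  by left; exists p.
by right; exists p, p'; split=> //; apply: orphan_rel.
Qed.

Section HoleAtSecondPosition.

Variables (m : nat) (u : seq letter).
Hypotheses (up : is_upword m.+1 u) (hole1 : nth Diamond u 1 = Diamond)
  (no_hole : Diamond \notin drop 2 u).

Lemma factor_no_hole l k : 1 < k -> Diamond \notin factor u l k.
Proof.
move=> k_gt1; apply: contra no_hole => /mem_take.
by rewrite -(subnK k_gt1) -drop_drop => /mem_drop.
Qed.

Lemma window_covers_some k : 1 < k -> k + m.+1 <= size u ->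
  exists q : 'S_m.+1, covers (factor u m.+1 k) q.
Proof.
move=> k_gt1 le_k; have [_ _ _ uniq_w _] := up.
have intK := int_lettersK (factor_no_hole m.+1 k_gt1).
rewrite -intK; apply: covers_ints_exists; last exact: uniq_w.
by rewrite -(size_map Some) intK size_factor.
Qed.

Lemma orphan_in_window2 (p : 'S_m.+1) :
  orphan (factor u m.+1 0) (factor u m.+1 1) (rcons (factor u m 2) Diamond) p ->
  2 + m.+1 <= size u /\ covers (factor u m.+1 2) p.
Proof.
case=> covF not0 not1; have [_ _ _ _ /(_ p) [k [[le_k cov_k] _]]] := up.
case: k le_k cov_k => [|[|[|k]]] le_k cov_k //; exfalso.
have le_k2 : k.+2 + m.+1 <= size u by lia.
have [q cov_q] := window_covers_some (k := k.+2) isT le_k2.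
have cov1 : covers (factor u m.+1 1) q.
  rewrite factor_cons ?hole1; last by lia.
  move: cov_q cov_k; rewrite factor_cons ?factor_rcons; try lia.
  rewrite -(int_lettersK (factor_no_hole m (k := k.+3) isT)) => cov_q cov_k.
  exact: covers_shift covF cov_k cov_q.
suff: 1 = k.+2 by [].
by apply: (upword_window_unique up _ le_k2 cov1 cov_q); lia.
Qed.

Lemma orphan_unique (p p' : 'S_m.+1) :
  orphan (factor u m.+1 0) (factor u m.+1 1) (rcons (factor u m 2) Diamond) p ->
  orphan (factor u m.+1 0) (factor u m.+1 1) (rcons (factor u m 2) Diamond) p' ->
  p = p'.
Proof.
move=> /orphan_in_window2[_ cov] /orphan_in_window2[_ cov'].
move: cov cov'; rewrite -(int_lettersK (factor_no_hole m.+1 (k := 2) isT)).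
exact: covers_ints_inj.
Qed.

Lemma upword_not_obstructed : m.+1 < size u ->
  ~ obstructed m.+1 (factor u m.+1 0) (factor u m.+1 1)
      (rcons (factor u m 2) Diamond).
Proof.
move=> lt_mu [[p [cov0 cov1]] | [p [p' [neq_pp' orph orph']]]].
  suff: 0 = 1 by [].
  by apply: (upword_window_unique up _ _ cov0 cov1); lia.
exact/neq_pp'/orphan_unique.
Qed.

End HoleAtSecondPosition.

Definition seq_rank (s : seq nat) (v : nat) : nat := count (fun y => y < v) s.

Lemma seq_rank_homo s : {in s &, {homo seq_rank s : a b / a < b}}.
Proof.
move=> a b a_s _ lt_ab; elim: s a_s => //= y s IH; rewrite inE.
case/predU1P=> [<- | /IH lt_s]; last first.
  rewrite -addnS; apply: leq_add lt_s.
  by case: (ltnP y a) => // /ltn_trans ->.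
rewrite ltnn lt_ab add1n ltnS; apply: sub_count => z /= /ltn_trans; exact.
Qed.

Lemma seq_rank_lt_size s v : v \in s -> seq_rank s v < size s.
Proof.
move=> v_s; rewrite -(count_predC (fun y => y < v)) -{1}[seq_rank s v]addn0.
by rewrite ltn_add2l -has_count; apply/hasP; exists v => //=; rewrite ltnn.
Qed.

Lemma exists_rank_embedding (s : seq nat) : exists2 g : nat -> nat,
  {in s &, {mono g : a b / a <= b}} & {in s, forall v, g v < size s}.
Proof.
exists (seq_rank s); [exact/leq_mono_in/seq_rank_homo | exact: seq_rank_lt_size].
Qed.

Fixpoint words (m k : nat) : seq (seq nat) :=
  if k is k'.+1 then [seq i :: w | i <- iota 0 m, w <- words m k'] else [:: [::]].

Lemma words_complete m r : all (fun v => v < m) r -> r \in words m (size r).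
Proof.
elim: r => //= a r IH /andP[lt_a /IH r_in].
by apply: allpairs_f r_in; rewrite mem_iota.
Qed.

(* Permutations are enumerated as [permutations (iota 0 n)] rather than as the
   finType ['S_n], whose enumeration is far too slow under [vm_compute]. *)
Definition coversb (f : seq letter) (s : seq nat) : bool :=
  all (fun i => all (fun j =>
    if nth Diamond f i is Some a then
      if nth Diamond f j is Some b then (a < b) == (nth 0 s i < nth 0 s j) else true
    else true) (iota 0 (size s))) (iota 0 (size s)).

Definition perm_seq n (p : 'S_n) : seq nat := [seq val (p i) | i <- enum 'I_n].

Lemma size_perm_seq n (p : 'S_n) : size (perm_seq p) = n.
Proof. by rewrite size_map size_enum_ord. Qed.

Lemma nth_perm_seq n (p : 'S_n) (i : 'I_n) : nth 0 (perm_seq p) i = p i.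
Proof. by rewrite (nth_map i) ?size_enum_ord // nth_ord_enum. Qed.

Lemma coversP n f (p : 'S_n) : size f = n -> covers f p <-> coversb f (perm_seq p).
Proof.
move=> sz; split=> [[_ cov] | /allP cov].
  apply/allP => i; rewrite mem_iota size_perm_seq => /andP[_ lt_i].
  apply/allP => j; rewrite mem_iota => /andP[_ lt_j].
  have := cov (Ordinal lt_i) (Ordinal lt_j) => /=.
  case: (nth Diamond f i) => [a|] //; case: (nth Diamond f j) => [b|] //.
  move=> /(_ a b erefl erefl) ->.
  by rewrite (nth_perm_seq p (Ordinal lt_i)) (nth_perm_seq p (Ordinal lt_j)).
split=> // i j a b fi fj; move: (cov i); rewrite mem_iota size_perm_seq ltn_ord.
move=> /(_ isT) /allP /(_ j); rewrite mem_iota ltn_ord fi fj !nth_perm_seq.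
by move=> /(_ isT) /eqP.
Qed.

Lemma perm_seq_onto n s :
  s \in permutations (iota 0 n) -> exists p : 'S_n, perm_seq p = s.
Proof.
rewrite mem_permutations => perm_s.
have uniq_s : uniq s by rewrite (perm_uniq perm_s) iota_uniq.
have sz : size s = n by rewrite (perm_size perm_s) size_iota.
have lt_s (i : 'I_n) : nth 0 s i < n.
  have : nth 0 s i \in iota 0 n by rewrite -(perm_mem perm_s) mem_nth ?sz.
  by rewrite mem_iota.
have inj : injective (fun i => Ordinal (lt_s i)).
  move=> i j /(congr1 val) /eqP; rewrite nth_uniq ?sz // => /eqP.
  exact: val_inj.
exists (perm inj); apply: (@eq_from_nth _ 0); first by rewrite size_perm_seq sz.
move=> i; rewrite size_perm_seq => lt_i.
by rewrite (nth_perm_seq _ (Ordinal lt_i)) permE.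
Qed.

Definition obstructedb n (w0 w1 wF : seq letter) : bool :=
  let P := permutations (iota 0 n) in
  let orphanb s := [&& coversb wF s, ~~ coversb w0 s & ~~ coversb w1 s] in
  has (fun s => coversb w0 s && coversb w1 s) P ||
  has (fun s => has (fun s' => [&& s != s', orphanb s & orphanb s']) P) P.

Lemma obstructedP n w0 w1 wF : size w0 = n -> size w1 = n -> size wF = n ->
  obstructedb n w0 w1 wF -> obstructed n w0 w1 wF.
Proof.
move=> /coversP cov0 /coversP cov1 /coversP covF.
case/orP=> [/hasP[s /perm_seq_onto[p <-] /andP[c0 c1]] | ].
  by left; exists p; rewrite cov0 cov1.
case/hasP=> s /perm_seq_onto[p <-] /hasP[s' /perm_seq_onto[p' <-]].
case/and3P=> neq /and3P[cF n0 n1] /and3P[cF' n0' n1']; right; exists p, p'.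
split; first by move=> eq_pp'; rewrite eq_pp' eqxx in neq.
  by split; rewrite ?covF ?cov0 ?cov1 ?(negbTE n0) ?(negbTE n1).
by split; rewrite ?covF ?cov0 ?cov1 ?(negbTE n0') ?(negbTE n1').
Qed.

Definition hole_check n : bool :=
  all (fun x => all (fun r =>
    uniq (x :: take n.-2 r) ==> uniq r ==>
    obstructedb n (Some x :: Diamond :: map Some (take n.-2 r))
      (Diamond :: map Some r) (rcons (map Some r) Diamond))
    (words n n.-1)) (iota 0 n).

Lemma hole_check_small n : n = 3 \/ n = 4 -> hole_check n.
Proof. by case=> ->; vm_compute. Qed.

Lemma hole_obstructed n x r : n = 3 \/ n = 4 -> size r = n.-1 ->
  uniq (x :: take n.-2 r) -> uniq r ->
  obstructed n (Some x :: Diamond :: map Some (take n.-2 r))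
    (Diamond :: map Some r) (rcons (map Some r) Diamond).
Proof.
move=> n34 sz_r uniq0 uniq1; have n_gt1 : 1 < n by case: n34 => ->.
have [g g_le g_lt] := exists_rank_embedding (x :: r).
have g_inj := incn_inj_in g_le.
have map_gS l : map (omap g) (map Some l) = map Some (map g l) by elim: l => //= a l ->.
have in_r l : {subset int_letters (map Some l) <= l}.
  by move=> v; rewrite int_letters_map_Some.
apply: (obstructed_relabel (leqW_mono_in g_le)).
- move=> v; rewrite /= inE => /predU1P[-> | /in_r /mem_take]; rewrite inE ?eqxx // => ->.
  by rewrite orbT.
- by move=> v /= /in_r v_r; rewrite inE v_r orbT.
- move=> v; rewrite /int_letters -cats1 pmap_cat cats0 => /in_r v_r.
  by rewrite inE v_r orbT.
rewrite /= map_rcons !map_gS map_take [omap g Diamond]/=.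
have size_xr : size (x :: r) = n by rewrite /= sz_r prednK // ltnW.
have g_x : g x \in iota 0 n by rewrite mem_iota -size_xr g_lt ?mem_head.
have g_r : map g r \in words n n.-1.
  rewrite -sz_r -(size_map g); apply/words_complete/allP => _ /mapP[v v_r ->].
  by rewrite -size_xr g_lt // inE v_r orbT.
have sub_xr : {subset x :: take n.-2 r <= x :: r}.
  by move=> v; rewrite !inE => /predU1P[-> | /mem_take ->]; rewrite ?eqxx ?orbT.
have := hole_check_small n34 => /allP /(_ _ g_x) /allP /(_ _ g_r).
rewrite -map_take -(map_cons g) !map_inj_in_uniq ?uniq0 ?uniq1 /=.
- apply: obstructedP;
    rewrite /= ?size_rcons !size_map ?size_takel ?sz_r ?leq_pred //; lia.
- by apply: sub_in2 g_inj => v v_r; rewrite inE v_r orbT.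
- exact: sub_in2 g_inj.
Qed.

Lemma single_hole_shape u : 1 < size u -> nth Diamond u 1 = Diamond ->
  count (pred1 Diamond) u = 1 -> exists x t, u = Some x :: Diamond :: map Some t.
Proof.
case: u => [|o0 [|o1 t]] // _ /= ->; rewrite eqxx add1n.
case: o0 => [x|] [] // no_hole; exists x, (int_letters t).
by rewrite int_lettersK //; apply/count_memPn.
Qed.

Theorem proposition2 (n : nat) : (n = 3 \/ n = 4) ->
  ~ (exists u : seq letter,
       [/\ is_upword n u, nth Diamond u 1 = Diamond &
           count (pred1 Diamond) u = 1]).
Proof.
move=> n34 [u [up hole one]].
have [k def_n] : exists k, n = k.+3 by case: n34 => ->; [exists 0 | exists 1].
subst n; have [le_u _ _ uniq_w _] := up.
have [x [t def_u]] := single_hole_shape (leq_trans (isT : 2 <= k.+3) le_u) hole one.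
have no_hole : Diamond \notin drop 2 u by rewrite def_u /= drop0; apply/mapP => -[].
have long : k.+3 < size u.
  apply: upword_size_gt up isT _ _; rewrite def_u // /= (nth_map 0) //.
  by move: le_u; rewrite def_u /= size_map; lia.
have sz_t : k.+2 <= size t by rewrite def_u /= size_map in long.
apply: (upword_not_obstructed up hole no_hole long).
have := uniq_w 0 le_u; have := uniq_w 1 long.
rewrite def_u /factor /= drop0 -!map_take !int_letters_map_Some => uniq1 uniq0.
rewrite -[take k.+1 t](take_takel _ (leqnSn k.+1)) in uniq0 *.
by apply: hole_obstructed; rewrite ?size_takel.
Qed.
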